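(* Consider the two-player game (defined in the context) in which each player, after learning its valuation, chooses a latency $t>0$ and a bid $m\ge0$, and let $b(g)=\int_0^1 m(v)\,dv$ be the expected equilibrium bid of a player in the symmetric equilibrium with strictly increasing score in which a zero-valuation type invests nothing. Then $\lim_{g\to\infty}b(g)=\frac16$, and $b(g)$ is an increasing function of $g$ for all sufficiently large $g$.
   Context: Fix $g>0$. Two players have valuations $v_1,v_2$ drawn independently and uniformly from $[0,1]$. After observing its valuation, a player chooses a bid $m\ge0$ and a latency $t>0$ (the time after the arbitrage opportunity at which its transaction reaches the sequencer), at total cost $m+\frac1t$. Its score is $s=\frac{gm}{m+1}-t$. The player with the higher score has its transaction ordered first and receives its valuation; costs are paid regardless, so the payoff is $v_i\cdot\mathbf{1}[\text{higher score}]-m-\frac1t$. In equilibrium each type $v$ chooses a cost-minimizing pair $(m(v),t(v))$ producing its equilibrium score $s(v)$. *)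

From HB Require Import structures.
From mathcomp Require Import all_boot all_order all_algebra.
From mathcomp Require Import all_classical all_reals all_analysis.
Set Implicit Arguments. Unset Strict Implicit. Unset Printing Implicit Defensive.
Import Order.TTheory GRing.Theory Num.Theory.
Import numFieldNormedType.Exports.
Local Open Scope classical_set_scope.
Local Open Scope ring_scope.

Definition score {R : realType} (g m t : R) : R := g * m / (m + 1) - t.

Definition cost {R : realType} (m t : R) : R := m + t^-1.

(* Probability that an opponent using strategy (bid, lat) (types uniform on
   [0,1], type 0 being a null event) has a strictly lower score than s. *)
Definition win_prob {R : realType} (g : R) (bid lat : R -> R) (s : R) : R :=
  fine (lebesgue_measure
          [set w : R | 0 < w <= 1 /\ score g (bid w) (lat w) < s]).

Definition payoff {R : realType} (g : R) (bid lat : R -> R) (v m t : R) : R :=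
  v * win_prob g bid lat (score g m t) - cost m t.

(* (bid, lat) is a symmetric equilibrium with strictly increasing score in
   which the zero-valuation type invests nothing (its cost tends to 0). *)
Definition is_selected_eq {R : realType} (g : R) (bid lat : R -> R) : Prop :=
  (forall v, 0 < v <= 1 -> 0 <= bid v /\ 0 < lat v) /\
  (forall v, 0 < v <= 1 -> forall m t, 0 <= m -> 0 < t ->
      payoff g bid lat v m t <= payoff g bid lat v (bid v) (lat v)) /\
  (forall v w, 0 < v -> v < w -> w <= 1 ->
      score g (bid v) (lat v) < score g (bid w) (lat w)) /\
  (cost (bid v) (lat v) @[v --> 0^'+] --> (0 : R)).

Definition exp_bid {R : realType} (bid : R -> R) : R :=
  Rintegral lebesgue_measure `[0, 1] bid.

From HB Require Import structures.
From mathcomp Require Import all_boot all_order all_algebra.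
From mathcomp Require Import all_classical all_reals all_analysis.
From mathcomp Require Import ring lra.
Import Order.TTheory GRing.Theory Num.Theory.
Import numFieldNormedType.Exports.
Local Open Scope classical_set_scope.
Local Open Scope ring_scope.
Set Implicit Arguments. Unset Strict Implicit. Unset Printing Implicit Defensive.

(* Spending a budget C = m + 1/t, a player's score g m/(m+1) - 1/(C - m) is
   maximised by the bid max(0, C - (C+1)/(√g+1)) (Engel's form of the
   Cauchy-Schwarz inequality), and the best score grows with C.  In an
   equilibrium with increasing score, type v wins with probability v, so
   incentive compatibility forces |D w - D v| <= (w - v)^2/2 for
   D v = cost v - v^2/2; hence D is constant, and 0 since the cost vanishes at
   type 0.  So every such equilibrium spends v^2/2 and bids optimally for that
   budget; conversely these strategies form an equilibrium, because a deviation
   costing c wins with probability at most √(2c).  The expected bid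
   ∫_0^1 max(0, v^2/2 - (v^2/2+1)/(√g+1)) dv lies within 3/(2(√g+1)) below
   1/6, and once √g >= 8 its integrand grows with g, by at least a positive
   multiple of v^2/2 - 1/8. *)

Lemma titu_lt (R : realFieldType) (a x y : R) : 0 < x -> 0 < y -> a * y != x ->
  (a + 1) ^+ 2 / (x + y) < a ^+ 2 / x + 1 / y.
Proof.
move=> x_gt0 y_gt0 neq; rewrite -subr_gt0.
have -> : a ^+ 2 / x + 1 / y - (a + 1) ^+ 2 / (x + y)
            = (a * y - x) ^+ 2 / (x * y * (x + y)).
  by field; rewrite !gt_eqF ?mulr_gt0 ?addr_gt0.
have xy_gt0 : 0 < x * y * (x + y) by rewrite !mulr_gt0 ?addr_gt0.
by rewrite divr_gt0 // exprn_even_gt0 //= subr_eq0.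
Qed.

Section budget.
Variables (R : realType) (g : R).
Hypothesis g_gt0 : 0 < g.

Definition budget_score (C m : R) : R := score g m (C - m)^-1.

Definition opt_bid (C : R) : R := Num.max 0 (C - (C + 1) / (Num.sqrt g + 1)).

Let sqrtg_gt0 : 0 < Num.sqrt g. Proof. by rewrite sqrtr_gt0. Qed.

Lemma opt_bid_ge0 C : 0 <= opt_bid C.
Proof. by rewrite le_max lexx. Qed.

Lemma opt_bid_ge C : C - (C + 1) / (Num.sqrt g + 1) <= opt_bid C.
Proof. by rewrite le_max lexx orbT. Qed.

Lemma opt_bid_le C : 0 <= C -> opt_bid C <= C.
Proof. by move=> C_ge0; rewrite ge_max C_ge0 gerBl divr_ge0 //; lra. Qed.

Lemma opt_bid_lt C : 0 < C -> opt_bid C < C.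
Proof. by move=> C_gt0; rewrite gt_max C_gt0 ltrBlDr ltrDl divr_gt0 //; lra. Qed.

Lemma budget_score_lt_opt C m : 0 < C -> 0 <= m -> m < C -> m != opt_bid C ->
  budget_score C m < budget_score C (opt_bid C).
Proof.
move=> C_gt0 m_ge0 mC; rewrite /budget_score /score /opt_bid.
have gE : g = Num.sqrt g ^+ 2 by rewrite sqr_sqrtr // ltW.
move: (Num.sqrt g) sqrtg_gt0 gE => a a_gt0 ->.
case: (leP (C - (C + 1) / (a + 1)) 0) => [corner|interior] m_neq.
- (* With a C <= 1, a bid m > 0 adds at most a^2 m to the score but costs more
     than that in latency. *)
  have m_gt0 : 0 < m by rewrite lt_def m_neq.
  have aC_le1 : a * C <= 1 by move: corner; rewrite subr_le0 ler_pdivlMr; lra.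
  have score_le : a ^+ 2 * m / (m + 1) <= a ^+ 2 * m.
    by rewrite ler_pdivrMr ?ler_peMr ?mulr_ge0 ?sqr_ge0; lra.
  have latency_gain : (C - m)^-1 - C^-1 = m / (C * (C - m)).
    by field; rewrite !gt_eqF // subr_gt0.
  have gain_gt : a ^+ 2 * m < m / (C * (C - m)).
    rewrite ltr_pdivlMr ?mulr_gt0 ?subr_gt0 //.
    have : (a * C) ^+ 2 * m <= m by rewrite ler_piMl // expr_le1 // mulr_ge0 // ltW.
    have : 0 < a ^+ 2 * C * m * m by rewrite !mulr_gt0 // exprn_gt0.
    rewrite exprMn; nra.
  rewrite mulr0 mul0r subr0; lra.
- set ms := C - _ in interior m_neq *.
  have ms_lt : ms < C by rewrite /ms ltrBlDr ltrDl divr_gt0 //; lra.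
  have scoreE k : -1 < k -> k < C ->
      a ^+ 2 * k / (k + 1) - (C - k)^-1 = a ^+ 2 - (a ^+ 2 / (k + 1) + 1 / (C - k)).
    by move=> k_gt k_lt; field; rewrite !gt_eqF ?subr_gt0 //; lra.
  rewrite !scoreE //; try lra.
  have aC_gt0 : 0 < a * C by rewrite mulr_gt0.
  have -> : a ^+ 2 / (ms + 1) + 1 / (C - ms) = (a + 1) ^+ 2 / (C + 1).
    by rewrite /ms; field; rewrite !gt_eqF //; lra.
  suff : (a + 1) ^+ 2 / (C + 1) < a ^+ 2 / (m + 1) + 1 / (C - m) by lra.
  rewrite -[C + 1](_ : m + 1 + (C - m) = C + 1); last by ring.
  apply: titu_lt; try lra; apply: contra m_neq => /eqP opt_eq; apply/eqP.
  rewrite /ms; apply: (@mulIf _ (a + 1)); first by rewrite gt_eqF //; lra.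
  by rewrite mulrBl divfK ?gt_eqF //; lra.
Qed.

Lemma budget_score_le_opt C m : 0 < C -> 0 <= m -> m < C ->
  budget_score C m <= budget_score C (opt_bid C).
Proof.
move=> C_gt0 m_ge0 mC; have [->//|m_neq] := eqVneq m (opt_bid C).
exact/ltW/budget_score_lt_opt.
Qed.

Lemma budget_score_lt_budget c C m : m < c -> c < C ->
  budget_score c m < budget_score C m.
Proof.
move=> mc cC; rewrite /budget_score /score ltrD2l ltrN2.
by rewrite ltf_pV2 ?posrE ?subr_gt0 // ?ltrD2r //; lra.
Qed.

Lemma score_le_opt m t C : 0 <= m -> 0 < t -> m + t^-1 <= C ->
  score g m t <= budget_score C (opt_bid C).
Proof.
move=> m_ge0 t_gt0 cost_le; have tV_gt0 : 0 < t^-1 by rewrite invr_gt0.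
have -> : score g m t = budget_score (m + t^-1) m by rewrite /budget_score addrC addKr invrK.
case: ltgtP cost_le => // [cost_lt _|<- _]; last by apply: budget_score_le_opt; lra.
apply: le_trans (budget_score_le_opt _ m_ge0 _); try lra.
by apply/ltW/budget_score_lt_budget; lra.
Qed.

Lemma opt_budget_score_lt C1 C2 : 0 < C1 -> C1 < C2 ->
  budget_score C1 (opt_bid C1) < budget_score C2 (opt_bid C2).
Proof.
move=> C1_gt0 C12; have := opt_bid_lt C1_gt0; have := opt_bid_ge0 C1.
move=> opt_ge0 opt_lt; apply: lt_le_trans (budget_score_lt_budget opt_lt C12) _.
by apply: budget_score_le_opt; lra.
Qed.

End budget.

Section win_prob.
Variables (R : realType) (g : R) (bid lat : R -> R).
Local Notation mu := (@lebesgue_measure R).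

Let lebesgue_measure_itv0x (x : R) : 0 <= x -> mu `]0, x[ = x%:E.
Proof.
move=> x_ge0; rewrite lebesgue_measure_itv /= lte_fin -EFinD subr0.
by case: ltgtP x_ge0 => // <-.
Qed.

Lemma win_prob_le s x : 0 <= x ->
  (forall w, 0 < w <= 1 -> score g (bid w) (lat w) < s -> w < x) ->
  win_prob g bid lat s <= x.
Proof.
move=> x_ge0 below; rewrite /win_prob; set A := [set w | _].
have A_sub : A `<=` `]0, x[.
  by move=> w [w01 lt]; rewrite /= in_itv /= (below w w01 lt) andbT; case/andP: w01.
have : (mu A <= x%:E)%E.
  (* [A] need not be measurable: compare outer measures. *)
  rewrite -lebesgue_measure_itv0x // /lebesgue_measure /lebesgue_stieltjes_measure.
  by rewrite /measure_extension; exact: le_mu_ext.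
by case: (mu A) (measure_ge0 mu A) => [r _|//|//]; rewrite lee_fin.
Qed.

Hypothesis score_incr : forall v w, 0 < v -> v < w -> w <= 1 ->
  score g (bid v) (lat v) < score g (bid w) (lat w).

Lemma win_prob_own v : 0 < v <= 1 -> win_prob g bid lat (score g (bid v) (lat v)) = v.
Proof.
case/andP=> v_gt0 v_le1; rewrite /win_prob.
suff -> : [set w | 0 < w <= 1 /\ score g (bid w) (lat w) < score g (bid v) (lat v)]
    = `]0, v[%classic by rewrite lebesgue_measure_itv0x ?ltW.
apply/seteqP; split=> w /=; rewrite in_itv /=.
- case=> /andP[-> w_le1] lt /=; rewrite ltNge; apply: contraTN lt => vw.
  rewrite -leNgt; case: ltgtP vw => // [vw _|-> _]; last exact: lexx.
  exact/ltW/score_incr.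
- case/andP=> w_gt0 wv; split; first by rewrite w_gt0; lra.
  exact: score_incr.
Qed.

End win_prob.

Lemma continuous_half_sqr (R : realType) : continuous (fun v : R => v ^+ 2 / 2).
Proof. by move=> v; apply: cvgMr_tmp; exact: exprn_continuous. Qed.

Section existence.
Variables (R : realType) (g : R).
Hypothesis g_gt0 : 0 < g.
Implicit Types v w : R.

Definition equil_bid v : R := opt_bid g (v ^+ 2 / 2).

Definition equil_lat v : R := (v ^+ 2 / 2 - equil_bid v)^-1.

Lemma equil_cost v : cost (equil_bid v) (equil_lat v) = v ^+ 2 / 2.
Proof. by rewrite /cost /equil_lat invrK addrC subrK. Qed.

Let half_sqr_gt0 v : 0 < v -> 0 < v ^+ 2 / 2.
Proof. by move=> v_gt0; rewrite divr_gt0 // exprn_gt0. Qed.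

Lemma equil_score_lt v w : 0 < v -> v < w ->
  score g (equil_bid v) (equil_lat v) < score g (equil_bid w) (equil_lat w).
Proof.
move=> v_gt0 vw; apply: opt_budget_score_lt => //; first exact: half_sqr_gt0.
by rewrite ltr_pM2r // ltrXn2r //; lra.
Qed.

Lemma equil_win_prob_le m t : 0 <= m -> 0 < t ->
  win_prob g equil_bid equil_lat (score g m t) ^+ 2 / 2 <= cost m t.
Proof.
move=> m_ge0 t_gt0.
have cost2_ge0 : 0 <= 2 * cost m t by rewrite mulr_ge0 // addr_ge0 // invr_ge0 ltW.
set P := win_prob _ _ _ _; suff P_le : P <= Num.sqrt (2 * cost m t).
  have P_ge0 : 0 <= P by exact/fine_ge0/measure_ge0.
  have : P ^+ 2 <= 2 * cost m t.
    by rewrite -(sqr_sqrtr cost2_ge0) ler_pXn2r // nnegrE sqrtr_ge0.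
  lra.
apply: win_prob_le => [|w /andP[w_gt0 _]]; first exact: sqrtr_ge0.
apply: contraTT; rewrite -!leNgt => w_le.
apply: score_le_opt => //; rewrite -/(cost m t).
suff : 2 * cost m t <= w ^+ 2 by lra.
by rewrite -(sqr_sqrtr cost2_ge0) ler_pXn2r // nnegrE ?sqrtr_ge0 // ltW.
Qed.

Lemma equil_selected : is_selected_eq g equil_bid equil_lat.
Proof.
have score_incr v w : 0 < v -> v < w -> w <= 1 ->
    score g (equil_bid v) (equil_lat v) < score g (equil_bid w) (equil_lat w).
  by move=> v_gt0 vw _; exact: equil_score_lt.
split; [|split; [|split]] => //.
- move=> v /andP[v_gt0 _]; split; first exact: opt_bid_ge0.
  by rewrite invr_gt0 subr_gt0 opt_bid_lt // half_sqr_gt0.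
- move=> v v01 m t m_ge0 t_gt0; rewrite /payoff win_prob_own ?equil_cost //.
  have := equil_win_prob_le m_ge0 t_gt0.
  have := sqr_ge0 (v - win_prob g equil_bid equil_lat (score g m t)).
  nra.
- rewrite (_ : (fun v => _) = fun v => v ^+ 2 / 2); last exact/funext/equil_cost.
  have := @continuous_half_sqr R 0; rewrite /continuous_at expr0n mul0r.
  exact: cvg_at_right_filter.
Qed.

End existence.

Lemma eq0_of_exp2_mul_le (R : archiRealFieldType) (d X : R) :
  (forall n, 2 ^+ n * `|d| <= X) -> d = 0.
Proof.
move=> bounded; apply/normr0_eq0/eqP; rewrite eq_le normr_ge0 andbT leNgt.
apply/negP => d_gt0.
have X_ge0 : 0 <= X / `|d|.
  by rewrite divr_ge0 // (le_trans _ (bounded 0%N)) // mulr_ge0.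
set n := Num.Def.archi_bound (X / `|d|).
have := archi_boundP X_ge0; rewrite -/n ltr_pdivrMr // => X_lt.
have n_le : (n%:R : R) <= 2 ^+ n by rewrite -natrX ler_nat ltnW // ltn_expl.
have := bounded n; have : n%:R * `|d| <= 2 ^+ n * `|d| by rewrite ler_pM2r.
lra.
Qed.

Lemma sqr_increment_const (R : archiRealFieldType) (I : set R) (D : R -> R) (K : R) :
  is_interval I ->
  (forall v w, I v -> I w -> `|D w - D v| <= K * (w - v) ^+ 2) ->
  forall v w, I v -> I w -> D w = D v.
Proof.
move=> I_itv incr.
suff halve n v w : I v -> I w -> 2 ^+ n * `|D w - D v| <= K * (w - v) ^+ 2.
  move=> v w Iv Iw; apply/eqP; rewrite -subr_eq0; apply/eqP.
  by apply: eq0_of_exp2_mul_le => n; exact: halve.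
elim: n v w => [|n IH] v w Iv Iw; first by rewrite mul1r incr.
set u := (v + w) / 2.
have Iu : I u.
  case: (leP v w) => vw; [apply: (I_itv v w) | apply: (I_itv w v)] => //;
    by rewrite /u; apply/andP; split; lra.
have tri : `|D w - D v| <= `|D w - D u| + `|D u - D v|.
  by rewrite (_ : D w - D v = (D w - D u) + (D u - D v)) ?ler_normD //; ring.
have := IH u w Iu Iw; have := IH v u Iv Iu.
have -> : w - u = (w - v) / 2 by rewrite /u; field.
have -> : u - v = (w - v) / 2 by rewrite /u; field.
have : 0 <= 2 ^+ n :> R by rewrite exprn_ge0.
rewrite [2 ^+ n.+1]exprS; nra.
Qed.

Section selected_equilibrium.
Variables (R : realType) (g : R) (bid lat : R -> R).
Hypothesis selected : is_selected_eq g bid lat.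
Implicit Types v w : R.

Lemma selected_cost v : 0 < v <= 1 -> cost (bid v) (lat v) = v ^+ 2 / 2.
Proof.
case: selected => feasible [best [score_incr cost_cvg0]].
pose D x := cost (bid x) (lat x) - x ^+ 2 / 2.
have D_incr x y : [set` `]0, 1]] x -> [set` `]0, 1]] y ->
    `|D y - D x| <= 2^-1 * (y - x) ^+ 2.
  (* Type x mimicking y pays cost y and wins with probability y, and conversely. *)
  rewrite /= !in_itv /= => x01 y01.
  have := best x x01 (bid y) (lat y) (feasible y y01).1 (feasible y y01).2.
  have := best y y01 (bid x) (lat x) (feasible x x01).1 (feasible x x01).2.
  rewrite /payoff !win_prob_own // => IC_y IC_x.
  by rewrite ler_norml /D; apply/andP; split; nra.
have D_const := sqr_increment_const (@interval_is_interval R `]0, 1]) D_incr.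
have D_cvg0 : D x @[x --> 0^'+] --> 0.
  rewrite -[X in _ --> X](subr0 0); apply: cvgB cost_cvg0 _.
  have := @continuous_half_sqr R 0; rewrite /continuous_at expr0n mul0r.
  exact: cvg_at_right_filter.
have D_cvgD1 : D x @[x --> 0^'+] --> D 1.
  apply: (@cvg_trans _ ((fun=> D 1) @ 0^'+)); last exact: cvg_cst.
  apply: near_eq_cvg; near=> x.
  apply: D_const; rewrite /= in_itv /= ?lexx ?ltr01 //.
  by apply/andP; split; near: x; [exact: nbhs_right_gt | exact: nbhs_right_le].
have D1_eq0 : D 1 = 0 := cvg_unique (@Rhausdorff R) D_cvgD1 D_cvg0.
move=> v01; apply/eqP; rewrite -subr_eq0 -/(D v) -D1_eq0 (D_const 1 v) //=.
by rewrite in_itv /= ltr01 lexx.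
Unshelve. all: by end_near.
Qed.

Lemma selected_bid v : 0 < g -> 0 < v <= 1 -> bid v = equil_bid g v.
Proof.
move=> g_gt0 v01; have cost_v := selected_cost v01.
case: selected => feasible [best _]; apply/eqP/negP => /negP.
move: (feasible v v01) cost_v; rewrite /equil_bid.
set m := bid v; set t := lat v; set C := v ^+ 2 / 2 => -[m_ge0 t_gt0] cost_v m_neq.
have tV_gt0 : 0 < t^-1 by rewrite invr_gt0.
have C_gt0 : 0 < C by rewrite -cost_v /cost; lra.
have mC : m < C by rewrite -cost_v /cost; lra.
set ms := opt_bid g C; set s := score g m t.
have ms_lt := opt_bid_lt g C_gt0; have ms_ge0 := opt_bid_ge0 g C.
have s_lt : s < budget_score g C ms.
  rewrite (_ : s = budget_score g C m); first exact: budget_score_lt_opt.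
  by rewrite /s /budget_score -cost_v /cost addrC addKr invrK.
(* The optimal bid with latency t' reaches the same score more cheaply. *)
pose t' := g * ms / (ms + 1) - s.
have t'_gt : (C - ms)^-1 < t' by move: s_lt; rewrite /t' /budget_score /score; lra.
have t'_gt0 : 0 < t' by apply: lt_trans t'_gt; rewrite invr_gt0 subr_gt0.
have cheaper : t'^-1 < C - ms.
  by rewrite -[C - ms]invrK ltf_pV2 // posrE invr_gt0 subr_gt0.
have := best v v01 ms t' ms_ge0 t'_gt0.
rewrite /payoff (_ : score g ms t' = s); last by rewrite /score /t'; ring.
rewrite -/m -/t -/s cost_v /cost; lra.
Qed.

End selected_equilibrium.

Section expected_bid.
Variable R : realType.
Local Notation mu := (@lebesgue_measure R).
Implicit Types g : R.

Lemma continuous_integrable_itv (f : R -> R) (a b : R) :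
  continuous f -> mu.-integrable `[a, b] (EFin \o f).
Proof.
move=> f_cont; apply: continuous_compact_integrable; first exact: segment_compact.
exact: continuous_subspaceT.
Qed.

Let continuous_half_sqr_affine (c d : R) : continuous (fun x : R => c * (x ^+ 2 / 2) + d).
Proof.
by move=> x; apply: cvgD; [apply: cvgMl_tmp; exact: continuous_half_sqr | exact: cvg_cst].
Qed.

Lemma Rintegral_half_sqr_affine (c d : R) :
  \int[mu]_(x in `[0, 1]) (c * (x ^+ 2 / 2) + d) = c / 6 + d.
Proof.
have sqr3_cont : continuous (fun x : R => 3 * x ^+ 2).
  by move=> x; apply: cvgMl_tmp; exact: exprn_continuous.
have int_sqr3 : \int[mu]_(x in `[0, 1]) (3 * x ^+ 2) = 1.
  rewrite /Rintegral (@continuous_FTC2 _ _ (fun x : R => x ^+ 3)) ?ltr01 //=.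
  - by rewrite expr1n expr0n subr0.
  - exact: continuous_subspaceT.
  - split; [by move=> x _; exact: exprn_derivable
           | apply: cvg_at_right_filter | apply: cvg_at_left_filter]; exact: exprn_continuous.
  - by move=> x _; rewrite exp_derive1.
have mu01 : fine (mu `[0, 1]) = 1.
  by rewrite lebesgue_measure_itv /= lte_fin ltr01 -EFinD subr0.
rewrite RintegralD //; last 2 first.
- apply: continuous_integrable_itv => x; apply: cvgMl_tmp; exact: continuous_half_sqr.
- exact/continuous_integrable_itv/cst_continuous.
rewrite Rintegral_cst // mu01 mulr1.
rewrite (_ : \int[mu]_(x in _) _ = \int[mu]_(x in `[0, 1]) (c / 6 * (3 * x ^+ 2))).
  by rewrite RintegralZl ?int_sqr3 ?mulr1 //; exact: continuous_integrable_itv.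
by apply: eq_Rintegral => x _; field.
Qed.

Lemma Rintegral_ge_half_sqr_affine (f : R -> R) (c d : R) : continuous f ->
    (forall x, 0 <= x <= 1 -> c * (x ^+ 2 / 2) + d <= f x) ->
  c / 6 + d <= \int[mu]_(x in `[0, 1]) f x.
Proof.
move=> f_cont above; rewrite -Rintegral_half_sqr_affine.
by apply: le_Rintegral => //; apply: continuous_integrable_itv.
Qed.

Lemma Rintegral_le_half_sqr_affine (f : R -> R) (c d : R) : continuous f ->
    (forall x, 0 <= x <= 1 -> f x <= c * (x ^+ 2 / 2) + d) ->
  \int[mu]_(x in `[0, 1]) f x <= c / 6 + d.
Proof.
move=> f_cont below; rewrite -Rintegral_half_sqr_affine.
by apply: le_Rintegral => //; apply: continuous_integrable_itv.
Qed.

Lemma continuous_equil_bid g : continuous (equil_bid g).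
Proof.
move=> x; rewrite /equil_bid /opt_bid.
apply: (@continuous_max R R (fun=> 0)
  (fun v => v ^+ 2 / 2 - (v ^+ 2 / 2 + 1) / (Num.sqrt g + 1))); first exact: cvg_cst.
apply: cvgB; first exact: continuous_half_sqr.
by apply: cvgMr_tmp; apply: cvgD; [exact: continuous_half_sqr | exact: cvg_cst].
Qed.

Lemma exp_bid_selected g bid lat : 0 < g -> is_selected_eq g bid lat ->
  exp_bid bid = exp_bid (equil_bid g).
Proof.
move=> g_gt0 selected.
have bidE x : x \in `]0, 1] -> bid x = equil_bid g x.
  by rewrite in_itv => x01; exact: (selected_bid selected).
have equil_mfun : measurable_fun (`]0, 1]%classic : set R) (equil_bid g).
  have := measurable_realfun.continuous_measurable_fun (@continuous_equil_bid g).
  exact: measurable_funS.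
have bid_mfun : measurable_fun (`]0, 1]%classic : set R) bid.
  by apply: eq_measurable_fun equil_mfun => x; rewrite inE => /bidE.
rewrite /exp_bid /Rintegral.
rewrite -!integral_itv_obnd_cbnd; try exact/measurable_realfun.measurable_EFinP.
by congr fine; apply: eq_integral => x; rewrite inE /= => /bidE ->.
Qed.

Lemma exp_equil_bid_le g : exp_bid (equil_bid g) <= 1 / 6.
Proof.
rewrite -[1 / 6]addr0; apply: Rintegral_le_half_sqr_affine.
  exact: continuous_equil_bid.
by move=> x _; rewrite mul1r addr0 opt_bid_le // divr_ge0 ?sqr_ge0.
Qed.

Lemma exp_equil_bid_ge g : 1 / 6 - 3 / 2 / (Num.sqrt g + 1) <= exp_bid (equil_bid g).
Proof.
apply: Rintegral_ge_half_sqr_affine; first exact: continuous_equil_bid.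
move=> x /andP[x_ge0 x_le1]; rewrite mul1r; apply: le_trans (opt_bid_ge _ _).
have sqrtg1_gt0 : 0 < Num.sqrt g + 1 by rewrite ltr_wpDl ?sqrtr_ge0.
rewrite lerD2l lerN2 ler_pM2r ?invr_gt0 //.
have : x ^+ 2 <= 1 by rewrite expr_le1.
lra.
Qed.

Lemma opt_bid_sub_ge g1 g2 C : 64 <= g1 -> g1 < g2 ->
  ((Num.sqrt g1 + 1)^-1 - (Num.sqrt g2 + 1)^-1) * (C - 1 / 8)
    <= opt_bid g2 C - opt_bid g1 C.
Proof.
move=> g1_ge g12; rewrite /opt_bid.
have a_ge : 8 <= Num.sqrt g1.
  by rewrite -[8]ger0_norm // -sqrtr_sqr ler_sqrt; [rewrite expr2; lra | lra].
have ab : Num.sqrt g1 < Num.sqrt g2 by rewrite ltr_sqrt //; lra.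
move: (Num.sqrt g1) (Num.sqrt g2) a_ge ab => a b a_ge ab.
set d := (a + 1)^-1 - (b + 1)^-1; have d_gt0 : 0 < d by rewrite subr_gt0 ltf_pV2 ?posrE; lra.
have shift : C - (C + 1) / (b + 1) = C - (C + 1) / (a + 1) + (C + 1) * d.
  by rewrite /d; field; rewrite !gt_eqF //; lra.
rewrite shift; case: (leP (C - (C + 1) / (a + 1)) 0) => [corner|interior].
- (* The optimum for g1 is the corner 0 only if C <= 1 / sqrt g1 <= 1/8. *)
  have C_le : C <= 1 / 8 by move: corner; rewrite subr_le0 ler_pdivlMr; nra.
  have : d * (C - 1 / 8) <= 0 by rewrite pmulr_rle0 // subr_le0.
  by rewrite subr0 le_max; lra.
- have C_gt0 : 0 < C by move: interior; rewrite subr_gt0 ltr_pdivrMr; nra.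
  rewrite (max_idPr _); last by rewrite addr_ge0 ?mulr_ge0 ?ltW //; lra.
  lra.
Qed.

Lemma exp_equil_bid_lt g1 g2 : 64 <= g1 -> g1 < g2 ->
  exp_bid (equil_bid g1) < exp_bid (equil_bid g2).
Proof.
move=> g1_ge g12; rewrite -subr_gt0 /exp_bid -RintegralB //; last 2 first.
- exact/continuous_integrable_itv/continuous_equil_bid.
- exact/continuous_integrable_itv/continuous_equil_bid.
set d := (Num.sqrt g1 + 1)^-1 - (Num.sqrt g2 + 1)^-1.
have d_gt0 : 0 < d.
  have sqrt_ge0 := sqrtr_ge0 g1.
  have sqrt_lt : Num.sqrt g1 < Num.sqrt g2 by rewrite ltr_sqrt; lra.
  by rewrite subr_gt0 ltf_pV2 ?posrE; lra.
apply: lt_le_trans (Rintegral_ge_half_sqr_affine (c := d) (d := - (d / 8)) _ _).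
- lra.
- by move=> x; apply: cvgB; exact: continuous_equil_bid.
- by move=> x _; have := opt_bid_sub_ge (x ^+ 2 / 2) g1_ge g12; rewrite -/d /equil_bid; lra.
Qed.

Lemma inv_sqrtD1_cvg0 : (Num.sqrt x + 1)^-1 @[x --> +oo] --> (0 : R).
Proof.
apply/gtr0_cvgV0; first by near=> x; rewrite ltr_wpDl ?sqrtr_ge0.
apply/cvgryPge => A; near=> x.
have A2_le : A ^+ 2 <= x by near: x; apply: nbhs_pinfty_ge; rewrite num_real.
by apply: le_trans (ler_norm A) _; rewrite -sqrtr_sqr ler_wpDr // ler_sqrt.
Unshelve. all: by end_near.
Qed.

Lemma exp_equil_bid_cvg : exp_bid (equil_bid g) @[g --> +oo] --> (1 / 6 : R).
Proof.
apply: (squeeze_cvgr (f := fun g => 1 / 6 - 3 / 2 / (Num.sqrt g + 1)) (h := cst (1 / 6))).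
- by near=> g; rewrite exp_equil_bid_ge exp_equil_bid_le.
- rewrite -[X in _ --> X]subr0; apply: cvgB; first exact: cvg_cst.
  by rewrite -(mulr0 (3 / 2)); apply: cvgMl_tmp; exact: inv_sqrtD1_cvg0.
- exact: cvg_cst.
Unshelve. all: by end_near.
Qed.

End expected_bid.

Theorem proposition6 (R : realType) :
  (forall g : R, 0 < g -> exists bid lat : R -> R, is_selected_eq g bid lat) /\
  (forall bid lat : R -> R -> R,
     (forall g : R, 0 < g -> is_selected_eq g (bid g) (lat g)) ->
     (exp_bid (bid g) @[g --> +oo] --> (1 / 6 : R)) /\
     (exists G : R, forall g1 g2 : R, G < g1 -> g1 < g2 ->
        exp_bid (bid g1) < exp_bid (bid g2))).
Proof.
split=> [g g_gt0|bid lat selected].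
  by exists (equil_bid g), (equil_lat g); exact: equil_selected.
have exp_bidE g : 0 < g -> exp_bid (bid g) = exp_bid (equil_bid g).
  by move=> g_gt0; exact: exp_bid_selected g_gt0 (selected g g_gt0).
split.
  apply: cvg_trans (@exp_equil_bid_cvg R); apply: near_eq_cvg; near=> g.
  by rewrite exp_bidE //; near: g; apply: nbhs_pinfty_gt.
by exists 64 => g1 g2 g1_gt g12; rewrite !exp_bidE ?exp_equil_bid_lt //; lra.
Unshelve. all: by end_near.
Qed.
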